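(* Let $t,s$ be two trees of $\mathcal{A}$ different from $|$, with $k$ and $l$ as below. Then $$t\prec s=\sum_{\substack{\sigma\in\mathrm{QSh}(k,l)\\ \sigma^{-1}(1)=\{1\}}}\sigma(t,s),\qquad t\cdot s=\sum_{\substack{\sigma\in\mathrm{QSh}(k,l)\\ \sigma^{-1}(1)=\{1,k+1\}}}\sigma(t,s),\qquad t\succ s=\sum_{\substack{\sigma\in\mathrm{QSh}(k,l)\\ \sigma^{-1}(1)=\{k+1\}}}\sigma(t,s).$$
   Context: Trees: planar rooted trees in which every internal vertex has at least two children; the root vertex hangs from a trunk edge; leaves are edges without upper vertex; $|$ is the one-leaf tree. $\mathcal A$ is the $\mathbb K$-vector space with basis these trees, with products defined recursively: $x_0\vee\cdots\vee x_k$ ($k\ge1$) grafts trees left to right on a new root vertex; for $x=x^{(0)}\vee\cdots\vee x^{(k)}$, $y=y^{(0)}\vee\cdots\vee y^{(l)}$: $x\prec y=x^{(0)}\vee\cdots\vee x^{(k-1)}\vee(x^{(k)}*y)$, $x\cdot y=x^{(0)}\vee\cdots\vee x^{(k-1)}\vee(x^{(k)}*y^{(0)})\vee y^{(1)}\vee\cdots\vee y^{(l)}$, $x\succ y=(x*y^{(0)})\vee y^{(1)}\vee\cdots\vee y^{(l)}$, with $*=\prec+\cdot+\succ$ and $|*z=z*|=z$. A $(k,l)$-quasi-shuffle is a surjection $\sigma:\{1,\dots,k+l\}\to\{1,\dots,n\}$ with $\sigma(1)<\cdots<\sigma(k)$ and $\sigma(k+1)<\cdots<\sigma(k+l)$;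 $\mathrm{QSh}(k,l)$ is their set. Let $v_1,\dots,v_k$ be the internal vertices (from the root up) on the right-most branch of $t$ (path from the root always to the right-most child), and $F_i$ the forest of subtrees at the children of $v_i$ other than the right-most one; let $w_1,\dots,w_l$ be the internal vertices on the left-most branch of $s$ and $F_{k+j}$ the forest of subtrees at the children of $w_j$ other than the left-most one. $\sigma(t,s)$ is the tree with a ladder of internal vertices $u_1$ (root),$\dots,u_n$ ($u_{p+1}$ child of $u_p$, ladder child of $u_n$ a leaf), the children of $u_p$ being from left to right: the trees of $F_i$ if $\sigma(i)=p$ ($i\le k$), the ladder child, the trees of $F_{k+j}$ if $\sigma(k+j)=p$. *)

From HB Require Import structures.
From mathcomp Require Import all_boot all_algebra.
Set Implicit Arguments. Unset Strict Implicit. Unset Printing Implicit Defensive.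
Import GRing.Theory.
Local Open Scope ring_scope.

(* Planar rooted trees: [Leaf] is the one-leaf tree |, [Node xs] is
   xs_0 \/ ... \/ xs_k (grafting left to right on a new root). *)
Inductive tree : Type := Leaf | Node of seq tree.

Fixpoint wf (t : tree) : bool :=
  match t with Leaf => true | Node xs => (1 < size xs)%N && all wf xs end.

Fixpoint tsize (t : tree) : nat :=
  match t with Leaf => 1 | Node xs => (sumn (map tsize xs)).+1%N end.

Fixpoint tree_enc (t : tree) : GenTree.tree unit :=
  match t with
  | Leaf => GenTree.Node 0 [::]
  | Node xs => GenTree.Node 1 (map tree_enc xs)
  end.
Fixpoint tree_dec (g : GenTree.tree unit) : option tree :=
  match g with
  | GenTree.Leaf _ => None
  | GenTree.Node 0 _ => Some Leaf
  | GenTree.Node _ gs => Some (Node (pmap tree_dec gs))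
  end.
Fixpoint tree_encK (t : tree) : tree_dec (tree_enc t) = Some t :=
  match t return tree_dec (tree_enc t) = Some t with
  | Leaf => erefl
  | Node xs =>
    let fix aux (l : seq tree) : pmap tree_dec (map tree_enc l) = l :=
      match l return pmap tree_dec (map tree_enc l) = l with
      | [::] => erefl
      | x :: l' =>
        @eq_ind_r _ (Some x) (fun o => oapp (cons^~ (pmap tree_dec (map tree_enc l'))) (pmap tree_dec (map tree_enc l')) o = x :: l')
          (f_equal (cons x) (aux l')) _ (tree_encK x)
      end in
    f_equal (fun l => Some (Node l)) (aux xs)
  end.
HB.instance Definition _ := Countable.copy tree (pcan_type tree_encK).

Definition rlast (xs : seq tree) : tree := last Leaf xs.
Definition rinit (xs : seq tree) : seq tree := take (size xs).-1 xs.

(* The products, computed on basis trees; the result is a formal sum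
   of trees (with multiplicity) represented as a list.  [star_f] uses a
   fuel argument; the fuel [tsize x + tsize y] is always sufficient
   since every recursive call strictly decreases tsize x + tsize y. *)
Fixpoint star_f (n : nat) (x y : tree) {struct n} : seq tree :=
  match n with
  | 0 => [::]
  | n'.+1 =>
    match x, y with
    | Leaf, _ => [:: y]
    | _, Leaf => [:: x]
    | Node xs, Node ys =>
      [seq Node (rcons (rinit xs) z) | z <- star_f n' (rlast xs) y]
      ++ [seq Node (rinit xs ++ z :: behead ys) | z <- star_f n' (rlast xs) (head Leaf ys)]
      ++ [seq Node (z :: behead ys) | z <- star_f n' x (head Leaf ys)]
    end
  end.

Definition star (x y : tree) : seq tree := star_f (tsize x + tsize y)%N x y.

Definition prec (x y : tree) : seq tree :=
  match x with
  | Leaf => [::]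
  | Node xs => [seq Node (rcons (rinit xs) z) | z <- star (rlast xs) y]
  end.
Definition dot (x y : tree) : seq tree :=
  match x, y with
  | Node xs, Node ys =>
    [seq Node (rinit xs ++ z :: behead ys) | z <- star (rlast xs) (head Leaf ys)]
  | _, _ => [::]
  end.
Definition succ (x y : tree) : seq tree :=
  match y with
  | Leaf => [::]
  | Node ys => [seq Node (z :: behead ys) | z <- star x (head Leaf ys)]
  end.

(* Forests F_1, ..., F_k along the right-most branch of t (from the root up) *)
Fixpoint rforests_f (n : nat) (t : tree) : seq (seq tree) :=
  match n with
  | 0 => [::]
  | n'.+1 =>
    match t with
    | Leaf => [::]
    | Node xs => rinit xs :: rforests_f n' (rlast xs)
    end
  end.
Definition rforests (t : tree) : seq (seq tree) := rforests_f (tsize t) t.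

(* Forests F_{k+1}, ..., F_{k+l} along the left-most branch of s *)
Fixpoint lforests (s : tree) : seq (seq tree) :=
  match s with
  | Leaf => [::]
  | Node ys =>
    match ys with
    | [::] => [::]
    | y0 :: yr => yr :: lforests y0
    end
  end.

(* (k,l)-quasi-shuffles, 0-indexed: sigma : {0..k+l-1} -> {0..n-1},
   surjective, strictly increasing on {0..k-1} and on {k..k+l-1}. *)
Definition is_qsh (k l n : nat) (sigma : {ffun 'I_(k + l) -> 'I_n}) : bool :=
  [forall p : 'I_n, exists i : 'I_(k + l), sigma i == p]
  && [forall i : 'I_(k + l), forall j : 'I_(k + l),
        ((i < j)%N && (j < k)%N) ==> (sigma i < sigma j)%N]
  && [forall i : 'I_(k + l), forall j : 'I_(k + l),
        ((k <= i)%N && (i < j)%N) ==> (sigma i < sigma j)%N].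

Section SigmaTree.
Variables (k l n : nat) (sigma : {ffun 'I_(k + l) -> 'I_n}) (Ft Fs : seq (seq tree)).

Definition sigL (p : nat) : seq tree :=
  flatten [seq nth [::] Ft i | i : 'I_(k + l) <- enum 'I_(k + l) & (i < k)%N && (val (sigma i) == p)].
Definition sigR (p : nat) : seq tree :=
  flatten [seq nth [::] Fs (i - k)%N | i : 'I_(k + l) <- enum 'I_(k + l) & (k <= i)%N && (val (sigma i) == p)].

Fixpoint ladder (m p : nat) : tree :=
  match m with
  | 0 => Leaf
  | m'.+1 => Node (sigL p ++ ladder m' p.+1 :: sigR p)
  end.
End SigmaTree.

Definition sigma_tree (k l n : nat) (sigma : {ffun 'I_(k + l) -> 'I_n}) (t s : tree) : tree :=
  ladder sigma (rforests t) (lforests s) n 0.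

(* Elements of the K-vector space A with basis the trees are represented by
   their coefficient functions tree -> K; [vec ts] is the element
   sum_{u in ts} u of A. *)
Definition vec (K : fieldType) (ts : seq tree) : tree -> K :=
  fun u => (count_mem u ts)%:R.

(* sum over sigma in QSh(k,l) with sigma^{-1}(0) = S (0-indexed) of sigma(t,s) *)
Definition qsh_sum (K : fieldType) (t s : tree) (P : nat -> bool) : tree -> K :=
  fun u =>
    let k := size (rforests t) in
    let l := size (lforests s) in
    \sum_(n < (k + l).+1)
      \sum_(sigma : {ffun 'I_(k + l) -> 'I_n} |
              is_qsh sigma && [forall i : 'I_(k + l), (val (sigma i) == 0) == P (val i)])
        (sigma_tree sigma t s == u)%:R.

(* A (k,l)-quasi-shuffle σ onto {0, ..., n-1} is determined by recording,
   for each point p, whether p is hit by the first block, the second block,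
   or both: it is a word of length n over the letters L = (1,0), R = (0,1)
   and B = (1,1) with k left and l right marks, and σ(t,s) is the ladder
   whose p-th vertex carries the next forest of t and/or of s as the p-th
   letter says.  Unfolding * once at the root shows that t * s is the sum of
   the ladders of all such words, and its three terms t ≺ s, t · s, t ≻ s
   collect the words starting with L, B and R.  As σ increases on each
   block, σ^-1(0) is contained in {0, k} (0-indexed), and the first letter
   is L, B or R exactly when σ^-1(0) is {0}, {0, k} or {k}. *)

From mathcomp Require Import all_boot all_algebra zify.
(* Imported after mathcomp, so that [tsize] is the size of trees, not of tuples. *)
From Stdlib Require Import FunctionalExtensionality.

Set Implicit Arguments. Unset Strict Implicit. Unset Printing Implicit Defensive.
Import GRing.Theory.

(* A letter [(a, b)] at position [p] of a word records whether the vertex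
   [u_p] of the ladder carries a forest of [t] ([a]) and/or one of [s] ([b]). *)
Definition letter := (bool * bool)%type.
Definition lL : letter := (true, false).
Definition lR : letter := (false, true).
Definition lB : letter := (true, true).

(* Listed in the order in which the recursion of [star_f] produces the trees. *)
Fixpoint words (k : nat) : nat -> seq (seq letter) :=
  match k with
  | 0 => fun l => [:: nseq l lR]
  | k'.+1 => fix words_k (l : nat) : seq (seq letter) :=
      match l with
      | 0 => map (cons lL) (words k' 0)
      | l'.+1 => map (cons lL) (words k' l'.+1) ++ map (cons lB) (words k' l')
                 ++ map (cons lR) (words_k l')
      end
  end.

Lemma wordsSS k l : words k.+1 l.+1 =
  map (cons lL) (words k l.+1) ++ map (cons lB) (words k l) ++ map (cons lR) (words k.+1 l).
Proof. by []. Qed.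

Lemma words_k0 k : words k 0 = [:: nseq k lL].
Proof. by elim: k => //= k ->. Qed.

Definition is_word k l (w : seq letter) :=
  [&& all (fun a : letter => a.1 || a.2) w, count fst w == k & count snd w == l].

Lemma is_word_cons k l (a : letter) w : is_word k l (a :: w) =
  [&& a.1 || a.2, (a.1 <= k) && (a.2 <= l) & is_word (k - a.1) (l - a.2) w].
Proof.
rewrite /is_word /=; case: a => [[] []]; case: k => [|k]; case: l => [|l];
  rewrite /= ?add0n ?subn0 ?subSS ?eqSS ?andbF.
all: by rewrite -?[k - _]/(k - 0) -?[l - _]/(l - 0) ?subn0.
Qed.

Lemma mem_map_cons (c a : letter) w W : (a :: w \in map (cons c) W) = (a == c) && (w \in W).
Proof. by apply/mapP/andP => [[w' w'_W [-> ->]] | [/eqP -> w_W]]; last exists w. Qed.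

Lemma nil_map_cons (c : letter) W : ([::] \in map (cons c) W) = false.
Proof. by apply/negbTE/mapP => -[]. Qed.

Lemma mem_words k l w : (w \in words k l) = is_word k l w.
Proof.
elim: k l w => [|k IHk] l w.
  rewrite inE; elim: w l => [|a w IH] [|l] //; rewrite is_word_cons.
    by case: a => [[] []].
  by rewrite /= eqseq_cons IH; case: a => [[] []]; rewrite //= subSS !subn0.
elim: l w => [|l IHl] [|a w]; rewrite ?mem_cat ?nil_map_cons //.
  by rewrite mem_map_cons is_word_cons IHk; case: a => [[] []]; rewrite //= subSS !subn0.
rewrite !mem_map_cons is_word_cons !IHk IHl.
by case: a => [[] []]; rewrite //= ?orbF ?subSS ?subn0.
Qed.

Lemma words_uniq k l : uniq (words k l).
Proof.
have uniq_map_cons (c : letter) W : uniq (map (cons c) W) = uniq W.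
  by apply: map_inj_uniq => x y [].
elim: k l => [|k IHk] l //; elim: l => [|l IHl]; first by rewrite uniq_map_cons.
rewrite wordsSS !cat_uniq !uniq_map_cons IHk IHk IHl /= !andbT has_cat.
by apply/andP; split; [apply/norP; split|];
  apply/hasPn => x /mapP [y _ ->]; rewrite mem_map_cons.
Qed.

Lemma size_word k l w : is_word k l w -> k <= size w <= k + l.
Proof.
case/and3P; rewrite all_count => /eqP cnt_w /eqP <- /eqP <-.
have cnt_U : count (predU fst snd) w = size w by rewrite -cnt_w; apply: eq_count.
have := count_predUI fst snd w; rewrite cnt_U count_size; lia.
Qed.

Section Marks.
Variable b : letter -> bool.

Definition marks (w : seq letter) : seq nat :=
  [seq p <- iota 0 (size w) | b (nth (false, false) w p)].

Lemma marks_cons a w : marks (a :: w) = (if b a then [:: 0] else [::]) ++ map succn (marks w).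
Proof.
rewrite /marks /= -add1n iotaDl filter_map /=.
by case: (b a); rewrite //= ?add1n; congr cons; apply: eq_map => x; rewrite add1n.
Qed.

Lemma mem_marks p w : (p \in marks w) = (p < size w) && b (nth (false, false) w p).
Proof. by rewrite mem_filter mem_iota add0n andbC. Qed.

Lemma marks_sorted w : sorted ltn (marks w).
Proof. by apply: sorted_filter; [apply: ltn_trans | apply: iota_ltn_sorted]. Qed.

Lemma marks_uniq w : uniq (marks w).
Proof. exact: filter_uniq (iota_uniq _ _). Qed.

Lemma size_marks w : size (marks w) = count b w.
Proof. by rewrite size_filter -[in RHS](mkseq_nth (false, false) w) count_map. Qed.

Lemma nth_marks_lt w j : 0 < size w -> nth 0 (marks w) j < size w.
Proof.
have [lt_j _|le_j] := ltnP j (size (marks w)); last by rewrite nth_default.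
by have := mem_nth 0 lt_j; rewrite mem_marks => /andP [].
Qed.

Lemma head_marks w : 0 < count b w ->
  (nth 0 (marks w) 0 == 0) = b (head (false, false) w).
Proof.
case: w => [|a w] //=; rewrite marks_cons; case: (b a) => //= cnt_w.
by rewrite (nth_map 0) // size_marks.
Qed.

Definition forest_at (w : seq letter) (F : seq (seq tree)) (p : nat) : seq tree :=
  if p \in marks w then nth [::] F (index p (marks w)) else [::].

Lemma forest_at_cons0 a w F : forest_at (a :: w) F 0 = if b a then head [::] F else [::].
Proof.
rewrite /forest_at marks_cons; case: (b a) => /=; first by case: F.
by case: ifP => // /mapP [].
Qed.

Lemma forest_at_consS a w F p :
  forest_at (a :: w) F p.+1 = forest_at w (if b a then behead F else F) p.
Proof.
rewrite /forest_at marks_cons; have succn_inj : injective succn by move=> ? ? [].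
case: (b a); rewrite /= ?inE /= (mem_map succn_inj) ?index_map //.
by case: ifP => // _; rewrite nth_behead.
Qed.

End Marks.

Fixpoint ladder_with (L R : nat -> seq tree) (m p : nat) : tree :=
  if m is m'.+1 then Node (L p ++ ladder_with L R m' p.+1 :: R p) else Leaf.

Lemma eq_ladder_with L R L' R' m p : L =1 L' -> R =1 R' ->
  ladder_with L R m p = ladder_with L' R' m p.
Proof. by move=> EL ER; elim: m p => //= m IH p; rewrite EL ER IH. Qed.

Lemma ladder_withS L R m p :
  ladder_with L R m p.+1 = ladder_with (L \o succn) (R \o succn) m p.
Proof. by elim: m p => //= m IH p; rewrite IH. Qed.

Definition word_tree (w : seq letter) (Ft Fs : seq (seq tree)) : tree :=
  ladder_with (forest_at fst w Ft) (forest_at snd w Fs) (size w) 0.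

Lemma word_tree_cons a w Ft Fs : word_tree (a :: w) Ft Fs =
  Node ((if a.1 then head [::] Ft else [::])
        ++ word_tree w (if a.1 then behead Ft else Ft) (if a.2 then behead Fs else Fs)
        :: (if a.2 then head [::] Fs else [::])).
Proof.
rewrite /word_tree /= !forest_at_cons0 ladder_withS.
by congr (Node (_ ++ _ :: _)); apply: eq_ladder_with => q /=; rewrite forest_at_consS.
Qed.

Lemma wf_Node xs : wf (Node xs) -> xs != [::] /\ all wf xs.
Proof. by case: xs => //= x xs /andP []. Qed.

Lemma wf_rlast xs : wf (Node xs) -> wf (rlast xs).
Proof. by case: xs => // x xs /andP [_ /allP wfxs]; apply: wfxs (mem_last x xs). Qed.

Lemma wf_head ys : wf (Node ys) -> wf (head Leaf ys).
Proof. by case: ys => //= y ys /and3P []. Qed.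

Lemma tsize_mem y ys : y \in ys -> tsize y <= sumn (map tsize ys).
Proof.
elim: ys => //= z ys IH; rewrite inE => /predU1P [-> | /IH le_y]; first exact: leq_addr.
exact: leq_trans le_y (leq_addl _ _).
Qed.

Lemma rforests_f_enough n m t : tsize t <= n -> tsize t <= m -> rforests_f n t = rforests_f m t.
Proof.
elim: n m t => [|n IH] [|m] [|xs] //=; rewrite !ltnS => le_n le_m; congr cons.
case: xs le_n le_m => [|x xs] le_n le_m; first by case: n {IH le_n}; case: m {le_m}.
by apply: IH; apply: leq_trans (tsize_mem (mem_last x xs)) _.
Qed.

Lemma rforests_Node xs : rforests (Node xs) = rinit xs :: rforests (rlast xs).
Proof.
rewrite /rforests /=; congr cons; case: xs => // x xs.
by apply: rforests_f_enough => //; apply: tsize_mem (mem_last x xs).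
Qed.

Lemma size_rforests_gt0 t : t != Leaf -> 0 < size (rforests t).
Proof. by case: t => // xs; rewrite rforests_Node. Qed.

Lemma size_lforests_gt0 s : wf s -> s != Leaf -> 0 < size (lforests s).
Proof. by case: s => // -[]. Qed.

Lemma rinit_rlast xs : xs != [::] -> rcons (rinit xs) (rlast xs) = xs.
Proof.
case/lastP: xs => // ys y _.
by rewrite /rinit /rlast size_rcons last_rcons -!cats1 take_size_cat.
Qed.

Lemma word_tree_rforests t : wf t ->
  word_tree (nseq (size (rforests t)) lL) (rforests t) [::] = t.
Proof.
have [n] := ubnPleq (tsize t); elim: n t => [|n IH] [|xs] // le_n wfxs; rewrite rforests_Node /= word_tree_cons /=.
have [xs_n0 _] := wf_Node wfxs.
rewrite IH ?cats1 ?rinit_rlast ?(wf_rlast wfxs) //.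
by case: xs xs_n0 {wfxs} le_n => // x xs _; apply: leq_trans (tsize_mem (mem_last x xs)).
Qed.

Lemma word_tree_lforests s : wf s ->
  word_tree (nseq (size (lforests s)) lR) [::] (lforests s) = s.
Proof.
have [n] := ubnPleq (tsize s); elim: n s => [|n IH] [|[|y ys]] //= le_n wfs; rewrite word_tree_cons /= IH //.
- exact: leq_trans (tsize_mem (mem_head y ys)) le_n.
- by case/and3P: wfs.
Qed.

Lemma star_words n t s : tsize t + tsize s <= n -> wf t -> wf s ->
  star_f n t s = [seq word_tree w (rforests t) (lforests s)
                 | w <- words (size (rforests t)) (size (lforests s))].
Proof.
elim: n t s => [|n IH] [|xs] [|ys] // le_n wft wfs.
- by rewrite /= (word_tree_lforests wfs).
- by rewrite [lforests _]/= words_k0 /= (word_tree_rforests wft).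
have [[xs_n0 _] [ys_n0 _]] := (wf_Node wft, wf_Node wfs).
have le_rlast : tsize (rlast xs) < tsize (Node xs).
  by case: xs xs_n0 {wft le_n} => // x xs _; apply: tsize_mem (mem_last x xs).
have le_head : tsize (head Leaf ys) < tsize (Node ys).
  by case: ys ys_n0 {wfs le_n} => // y ys _; apply: tsize_mem (mem_head y ys).
rewrite [star_f _ _ _]/= !IH ?(wf_rlast wft) ?(wf_head wfs) //; try lia.
case: ys ys_n0 {wfs le_n le_head} => // y ys _.
rewrite [lforests _]/= rforests_Node [size (_ :: _)]/= wordsSS !map_cat -!map_comp.
by congr (_ ++ _ ++ _); apply: eq_map => w /=; rewrite word_tree_cons //= cats1.
Qed.

Lemma filter_head_cons (c c' : letter) W :
  [seq w <- map (cons c) W | head (false, false) w == c'] = if c == c' then map (cons c) W else [::].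
Proof.
rewrite filter_map; case: eqP => [<-|ne_c].
  by rewrite (eq_filter (a2 := predT)) ?filter_predT // => w /=; rewrite eqxx.
by rewrite (eq_filter (a2 := pred0)) ?filter_pred0 // => w /=; apply/eqP.
Qed.

Lemma lforests_Node y ys : lforests (Node (y :: ys)) = ys :: lforests y.
Proof. by []. Qed.

Lemma products_words t s : wf t -> wf s -> t != Leaf -> s != Leaf ->
  let W c := [seq word_tree w (rforests t) (lforests s)
             | w <- words (size (rforests t)) (size (lforests s)) & head (false, false) w == c] in
  [/\ prec t s = W lL, dot t s = W lB & succ t s = W lR].
Proof.
case: t => // xs; case: s => // -[//|y ys] wft wfs _ _ W; rewrite {}/W.
have [wf_l wf_y] := (wf_rlast wft, wf_head wfs).
rewrite /prec /dot /succ /star !star_words // rforests_Node.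
rewrite !lforests_Node; set Ft := rforests _; set Fs := lforests y.
rewrite [size (_ :: Ft)]/= [size (_ :: Fs)]/= wordsSS.
rewrite !filter_cat !filter_head_cons /= !cats0 -!map_comp.
by split; apply: eq_map => w /=; rewrite word_tree_cons //= cats1.
Qed.

Lemma marks_map_iota (b : letter -> bool) (f : nat -> letter) N (A : seq nat) :
  sorted ltn A -> all (fun p => p < N) A -> (forall p, b (f p) = (p \in A)) ->
  marks b [seq f p | p <- iota 0 N] = A.
Proof.
move=> sorted_A /allP A_lt bfA.
apply: (irr_sorted_eq ltn_trans ltnn (marks_sorted _ _) sorted_A) => p.
rewrite mem_marks size_map size_iota; case: ltnP => [lt_pN | le_Np].
  by rewrite (nth_map 0) ?size_iota // nth_iota // add0n bfA.
by apply/esym/negbTE/negP => /A_lt; rewrite ltnNge le_Np.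
Qed.

Lemma sorted_enum_ord m : sorted (relpre val ltn) (enum 'I_m).
Proof. by rewrite -sorted_map val_enum_ord iota_ltn_sorted. Qed.

Section QuasiShuffles.
Variables k l : nat.

Lemma qshP N (sigma : {ffun 'I_(k + l) -> 'I_N}) : is_qsh sigma <->
  [/\ forall p, exists i, sigma i = p,
      forall i j : 'I_(k + l), i < j -> j < k -> sigma i < sigma j &
      forall i j : 'I_(k + l), k <= i -> i < j -> sigma i < sigma j].
Proof.
split.
  case/andP => /andP [/forallP surj /forallP incr1] /forallP incr2; split.
  - by move=> p; case/existsP: (surj p) => i /eqP; exists i.
  - by move=> i j lt_ij lt_jk; have /forallP/(_ j) := incr1 i; rewrite lt_ij lt_jk.
  - by move=> i j le_ki lt_ij; have /forallP/(_ j) := incr2 i; rewrite lt_ij le_ki.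
case=> surj incr1 incr2; apply/andP; split; [apply/andP; split|].
- by apply/forallP => p; case: (surj p) => i <-; apply/existsP; exists i.
- by apply/forallP => i; apply/forallP => j; apply/implyP => /andP []; apply: incr1.
- by apply/forallP => i; apply/forallP => j; apply/implyP => /andP []; apply: incr2.
Qed.

Definition qsh_of_word n (w : seq letter) : {ffun 'I_(k + l) -> 'I_n.+1} :=
  [ffun i : 'I_(k + l) =>
     inord (if i < k then nth 0 (marks fst w) i else nth 0 (marks snd w) (i - k))].

Lemma qsh_of_wordE n w i : size w = n.+1 ->
  val (qsh_of_word n w i) =
  if i < k then nth 0 (marks fst w) i else nth 0 (marks snd w) (i - k).
Proof.
move=> sz_w; rewrite ffunE /= inordK // -sz_w.
by case: ifP => _; apply: nth_marks_lt; rewrite sz_w.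
Qed.

Lemma qsh_of_word_qsh n w : is_word k l w -> size w = n.+1 -> is_qsh (qsh_of_word n w).
Proof.
move=> /and3P [/allP w_ne /eqP cnt_t /eqP cnt_s] sz_w; apply/qshP; split.
- move=> p; have lt_pw : (p : nat) < size w by rewrite sz_w.
  have /orP [in_t | in_s] := w_ne _ (mem_nth (false, false) lt_pw).
  + have p_t : (p : nat) \in marks fst w by rewrite mem_marks lt_pw.
    have lt_i : index (p : nat) (marks fst w) < k by rewrite -cnt_t -size_marks index_mem.
    exists (Ordinal (ltn_addr l lt_i)); apply: val_inj.
    by rewrite qsh_of_wordE //= lt_i nth_index.
  + have p_s : (p : nat) \in marks snd w by rewrite mem_marks lt_pw.
    have lt_i : k + index (p : nat) (marks snd w) < k + l.
      by rewrite ltn_add2l -cnt_s -size_marks index_mem.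
    exists (Ordinal lt_i); apply: val_inj.
    by rewrite qsh_of_wordE //= ltnNge leq_addr /= addKn nth_index.
- move=> i j lt_ij lt_jk; rewrite !qsh_of_wordE // lt_jk (ltn_trans lt_ij lt_jk).
  apply: (sorted_ltn_nth ltn_trans 0 (marks_sorted _ _)) => //;
    by rewrite inE size_marks cnt_t // (ltn_trans lt_ij lt_jk).
- move=> i j le_ki lt_ij; have le_kj := leq_trans le_ki (ltnW lt_ij).
  rewrite !qsh_of_wordE // (ltnNge i) (ltnNge j) le_ki le_kj /=.
  have [lt_i lt_j] := (ltn_ord i, ltn_ord j).
  apply: (sorted_ltn_nth ltn_trans 0 (marks_sorted _ _)); rewrite ?inE ?size_marks ?cnt_s; lia.
Qed.

Lemma qsh_of_word_inj n w1 w2 : is_word k l w1 -> is_word k l w2 ->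
  size w1 = n.+1 -> size w2 = n.+1 -> qsh_of_word n w1 = qsh_of_word n w2 -> w1 = w2.
Proof.
move=> /and3P [_ /eqP t1 /eqP s1] /and3P [_ /eqP t2 /eqP s2] sz1 sz2 E.
have val_E i : val (qsh_of_word n w1 i) = val (qsh_of_word n w2 i) by rewrite E.
have E_t : marks fst w1 = marks fst w2.
  apply: (eq_from_nth (x0 := 0)) => [|j]; rewrite !size_marks ?t1 ?t2 // => lt_jk.
  by have := val_E (Ordinal (ltn_addr l lt_jk)); rewrite !qsh_of_wordE //= lt_jk.
have E_s : marks snd w1 = marks snd w2.
  apply: (eq_from_nth (x0 := 0)) => [|j]; rewrite !size_marks ?s1 ?s2 // => lt_jl.
  have lt_kj : k + j < k + l by rewrite ltn_add2l.
  by have := val_E (Ordinal lt_kj); rewrite !qsh_of_wordE //= ltnNge leq_addr /= addKn.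
apply: (eq_from_nth (x0 := (false, false))) => [|p lt_p1]; first by rewrite sz1 sz2.
have lt_p2 : p < size w2 by rewrite sz2 -sz1.
have := congr1 (fun s => p \in s) E_t; have := congr1 (fun s => p \in s) E_s.
rewrite /= !mem_marks lt_p1 lt_p2 /=.
by case: (nth _ w1 p) (nth _ w2 p) => [a1 b1] [a2 b2] /= -> ->.
Qed.

Section WordOfQsh.
Variables (N : nat) (sigma : {ffun 'I_(k + l) -> 'I_N}).

Definition qsh_left : seq nat := [seq val (sigma (lshift l i)) | i <- enum 'I_k].
Definition qsh_right : seq nat := [seq val (sigma (rshift k j)) | j <- enum 'I_l].

Definition word_of_qsh : seq letter :=
  [seq (p \in qsh_left, p \in qsh_right) | p <- iota 0 N].

Lemma size_word_of_qsh : size word_of_qsh = N.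
Proof. by rewrite size_map size_iota. Qed.

Hypothesis sigma_qsh : is_qsh sigma.

Lemma marks_word_of_qsh : marks fst word_of_qsh = qsh_left /\ marks snd word_of_qsh = qsh_right.
Proof.
have [_ incr1 incr2] := (qshP sigma).1 sigma_qsh.
have lt_N (I : Type) (g : I -> 'I_(k + l)) (s : seq I) :
  all (fun p => p < N) [seq val (sigma (g i)) | i <- s].
  by elim: s => //= i s ->; rewrite andbT.
split; apply: marks_map_iota; rewrite ?lt_N //.
- rewrite sorted_map; apply: sub_sorted (sorted_enum_ord k) => i j lt_ij.
  exact: (incr1 (lshift l i) (lshift l j) lt_ij (ltn_ord j)).
- rewrite sorted_map; apply: sub_sorted (sorted_enum_ord l) => i j lt_ij.
  by apply: (incr2 (rshift k i) (rshift k j)); rewrite /= ?leq_addr ?ltn_add2l.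
Qed.

Lemma word_of_qsh_word : is_word k l word_of_qsh.
Proof.
have [surj _ _] := (qshP sigma).1 sigma_qsh.
have [mt ms] := marks_word_of_qsh.
apply/and3P; split; rewrite -?size_marks ?mt ?ms ?size_map -?enumT ?size_enum_ord //.
apply/allP => _ /mapP [p p_N ->] /=; rewrite mem_iota /= in p_N.
have [i /(congr1 val) /= <-] := surj (Ordinal p_N).
case: (splitP i) => j i_j; apply/orP; [left | right]; apply/mapP; exists j; rewrite ?mem_enum //.
  by congr (val (sigma _)); apply: val_inj.
by congr (val (sigma _)); apply: val_inj.
Qed.

End WordOfQsh.

Lemma qsh_of_word_of_qsh n (sigma : {ffun 'I_(k + l) -> 'I_n.+1}) :
  is_qsh sigma -> qsh_of_word n (word_of_qsh sigma) = sigma.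
Proof.
move=> sigma_qsh; have [mt ms] := marks_word_of_qsh sigma_qsh.
apply/ffunP => i; apply: val_inj; rewrite qsh_of_wordE ?size_word_of_qsh // mt ms.
case: ltnP => [lt_ik | le_ki].
  rewrite (nth_map (Ordinal lt_ik)) -?enumT ?size_enum_ord //.
  by congr (val (sigma _)); apply: val_inj; rewrite /= nth_enum_ord.
have lt_ikl : i - k < l by have := ltn_ord i; lia.
rewrite (nth_map (Ordinal lt_ikl)) -?enumT ?size_enum_ord //.
by congr (val (sigma _)); apply: val_inj; rewrite /= nth_enum_ord // subnKC.
Qed.

End QuasiShuffles.

Lemma ladderE k l n (sigma : {ffun 'I_(k + l) -> 'I_n}) Ft Fs m p :
  ladder sigma Ft Fs m p = ladder_with (sigL sigma Ft) (sigR sigma Fs) m p.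
Proof. by elim: m p => //= m IH p; rewrite IH. Qed.

Section QuasiShuffleSums.
Variables k l : nat.

Lemma big_qsh_words (R : Type) (idx : R) (op : Monoid.com_law idx) n
    (F : {ffun 'I_(k + l) -> 'I_n.+1} -> R) :
  \big[op/idx]_(sigma | is_qsh sigma) F sigma =
  \big[op/idx]_(w <- words k l | size w == n.+1) F (qsh_of_word k l n w).
Proof.
rewrite -big_filter -[RHS]big_filter -(big_map (qsh_of_word k l n) xpredT).
apply: perm_big; apply: uniq_perm.
- by rewrite filter_uniq // index_enum_uniq.
- rewrite map_inj_in_uniq ?filter_uniq ?words_uniq // => w1 w2.
  rewrite !mem_filter !mem_words => /andP [/eqP sz1 w1_w] /andP [/eqP sz2 w2_w].
  exact: qsh_of_word_inj.
move=> sigma; rewrite mem_filter mem_index_enum andbT; apply/idP/mapP => [sigma_qsh | [w]].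
  exists (word_of_qsh sigma); last by rewrite qsh_of_word_of_qsh.
  by rewrite mem_filter mem_words word_of_qsh_word // size_word_of_qsh eqxx.
by rewrite mem_filter mem_words => /andP [/eqP sz_w w_w] ->; apply: qsh_of_word_qsh.
Qed.

Lemma qsh_fiber0E N (sigma : {ffun 'I_(k + l) -> 'I_N}) (P : nat -> bool)
    (lt_0 : 0 < k + l) (lt_k : k < k + l) :
  is_qsh sigma -> (forall i, i != 0 -> i != k -> P i = false) ->
  [forall i, (val (sigma i) == 0) == P (val i)] =
  ((val (sigma (Ordinal lt_0)) == 0) == P 0) && ((val (sigma (Ordinal lt_k)) == 0) == P k).
Proof.
move=> /qshP [_ incr1 incr2] P0; apply/forallP/andP => [fib | [fib_0 fib_k] i].
  by split; [apply: (fib (Ordinal lt_0)) | apply: (fib (Ordinal lt_k))].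
have [i_0 | i_n0] := eqVneq (val i) 0; first by rewrite (_ : i = Ordinal lt_0) //; apply: val_inj.
have [i_k | i_nk] := eqVneq (val i) k; first by rewrite (_ : i = Ordinal lt_k) //; apply: val_inj.
rewrite P0 // eqbF_neg -lt0n; case: (ltnP i k) => [lt_ik | le_ki].
  by apply: leq_ltn_trans (leq0n _) (incr1 (Ordinal lt_0) i _ lt_ik); rewrite lt0n.
apply: leq_ltn_trans (leq0n _) (incr2 (Ordinal lt_k) i (leqnn k) _).
by rewrite ltn_neqAle eq_sym i_nk.
Qed.

Lemma qsh_of_word_fiber0E n w (P : nat -> bool) : 0 < k -> 0 < l ->
  (forall i, i != 0 -> i != k -> P i = false) -> is_word k l w -> size w = n.+1 ->
  [forall i, (val (qsh_of_word k l n w i) == 0) == P (val i)] =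
  (head (false, false) w == (P 0, P k)).
Proof.
move=> k_gt0 l_gt0 P0 w_w sz_w.
have lt_0 : 0 < k + l by rewrite addn_gt0 k_gt0.
have lt_k : k < k + l by rewrite -{1}[k]addn0 ltn_add2l.
rewrite (qsh_fiber0E lt_0 lt_k (qsh_of_word_qsh w_w sz_w) P0) !qsh_of_wordE //= k_gt0 ltnn subnn.
case/and3P: w_w => _ /eqP cnt_t /eqP cnt_s.
by rewrite !head_marks ?cnt_t ?cnt_s.
Qed.

Lemma sigL_qsh_of_word n w Ft p : is_word k l w -> size w = n.+1 ->
  sigL (qsh_of_word k l n w) Ft p = forest_at fst w Ft p.
Proof.
move=> /and3P [_ /eqP cnt_t _] sz_w; rewrite /sigL /forest_at; case: ifP => p_t.
  have lt_i : index p (marks fst w) < k by rewrite -cnt_t -size_marks index_mem.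
  rewrite (eq_filter (a2 := pred1 (Ordinal (ltn_addr l lt_i)))); last first.
    move=> i /=; rewrite qsh_of_wordE //; apply/andP/eqP => [[lt_ik /eqP p_i] | ->].
      rewrite lt_ik in p_i; apply: val_inj => /=.
      by rewrite -p_i index_uniq ?marks_uniq // size_marks cnt_t.
    by rewrite /= lt_i nth_index.
  by rewrite filter_pred1_uniq ?enum_uniq ?mem_enum //= cats0.
rewrite (eq_filter (a2 := pred0)) ?filter_pred0 // => i /=.
rewrite qsh_of_wordE //; apply/negbTE/andP => -[lt_ik /eqP p_i].
by move: p_t; rewrite -p_i lt_ik mem_nth // size_marks cnt_t.
Qed.

Lemma sigR_qsh_of_word n w Fs p : is_word k l w -> size w = n.+1 ->
  sigR (qsh_of_word k l n w) Fs p = forest_at snd w Fs p.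
Proof.
move=> /and3P [_ _ /eqP cnt_s] sz_w; rewrite /sigR /forest_at; case: ifP => p_s.
  have lt_i : k + index p (marks snd w) < k + l.
    by rewrite ltn_add2l -cnt_s -size_marks index_mem.
  rewrite (eq_filter (a2 := pred1 (Ordinal lt_i))); last first.
    move=> i /=; rewrite qsh_of_wordE //; apply/andP/eqP => [[le_ki /eqP p_i] | ->].
      rewrite ltnNge le_ki /= in p_i; apply: val_inj => /=.
      rewrite -p_i index_uniq ?marks_uniq ?subnKC // size_marks cnt_s.
      by have := ltn_ord i; lia.
    by rewrite /= leq_addr ltnNge leq_addr /= addKn nth_index.
  by rewrite filter_pred1_uniq ?enum_uniq ?mem_enum //= cats0 addKn.
rewrite (eq_filter (a2 := pred0)) ?filter_pred0 // => i /=.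
rewrite qsh_of_wordE //; apply/negbTE/andP => -[le_ki /eqP p_i].
move: p_s; rewrite -p_i ltnNge le_ki mem_nth // size_marks cnt_s.
by have := ltn_ord i; lia.
Qed.

Lemma ladder_qsh_of_word n w Ft Fs : is_word k l w -> size w = n.+1 ->
  ladder (qsh_of_word k l n w) Ft Fs n.+1 0 = word_tree w Ft Fs.
Proof.
move=> w_w sz_w; rewrite ladderE /word_tree sz_w.
by apply: eq_ladder_with => p; [apply: sigL_qsh_of_word | apply: sigR_qsh_of_word].
Qed.

End QuasiShuffleSums.

Lemma partition_big_seq_ord (R : Type) (idx : R) (op : Monoid.com_law idx) (T : eqType)
    N (f : T -> nat) (W : seq T) (F : T -> R) :
  {in W, forall w, f w < N} ->
  \big[op/idx]_(n < N) \big[op/idx]_(w <- W | f w == n) F w = \big[op/idx]_(w <- W) F w.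
Proof.
move=> lt_N.
rewrite (eq_bigr (fun n : 'I_N => \big[op/idx]_(w <- W) if f w == n then F w else idx));
  last by move=> n _; rewrite big_mkcond.
rewrite exchange_big; apply: eq_big_seq => w /lt_N lt_w; rewrite -big_mkcond /=.
rewrite (eq_bigl (fun n : 'I_N => n == f w :> nat)) => [|n]; last exact: eq_sym.
by rewrite (big_ord1_eq _ (fun=> F w)) lt_w.
Qed.

Lemma qsh_count_words k l Ft Fs (P : nat -> bool) u : 0 < k -> 0 < l ->
  (forall i, i != 0 -> i != k -> P i = false) ->
  \sum_(n < (k + l).+1)
     \sum_(sigma : {ffun 'I_(k + l) -> 'I_n} |
             is_qsh sigma && [forall i, (val (sigma i) == 0) == P (val i)])
       (ladder sigma Ft Fs n 0 == u)
  = count (fun w => (head (false, false) w == (P 0, P k)) && (word_tree w Ft Fs == u))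
          (words k l).
Proof.
move=> k_gt0 l_gt0 P0.
have fibers n :
    \sum_(sigma : {ffun 'I_(k + l) -> 'I_n} |
            is_qsh sigma && [forall i, (val (sigma i) == 0) == P (val i)])
      (ladder sigma Ft Fs n 0 == u)
  = \sum_(w <- words k l | size w == n)
      ((head (false, false) w == (P 0, P k)) && (word_tree w Ft Fs == u)).
  case: n => [|n].
    have lt_0 : 0 < k + l by rewrite addn_gt0 k_gt0.
    rewrite big1 => [|sigma _]; last by case: (sigma (Ordinal lt_0)).
    rewrite big1_seq => // w /andP [/eqP sz_w].
    by rewrite mem_words => /size_word; rewrite sz_w leqNgt k_gt0.
  rewrite big_mkcondr big_qsh_words [LHS]big_seq_cond [RHS]big_seq_cond.
  apply: eq_bigr => w /andP [w_w /eqP sz_w].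
  rewrite mem_words in w_w.
  by rewrite qsh_of_word_fiber0E // ladder_qsh_of_word //; case: ifP.
under eq_bigr do rewrite fibers.
rewrite partition_big_seq_ord => [|w].
  by rewrite -sum1_count [RHS]big_mkcond; apply: eq_bigr => w _; case: ifP.
by rewrite mem_words => /size_word /andP [_]; rewrite ltnS.
Qed.

Lemma qsh_sum_words (K : fieldType) t s (P : nat -> bool) :
  t != Leaf -> wf s -> s != Leaf ->
  (forall i, i != 0 -> i != size (rforests t) -> P i = false) ->
  qsh_sum K t s P =
  vec K [seq word_tree w (rforests t) (lforests s)
        | w <- words (size (rforests t)) (size (lforests s))
        & head (false, false) w == (P 0, P (size (rforests t)))].
Proof.
move=> t_nL wfs s_nL P0; apply: functional_extensionality => u.
rewrite /qsh_sum /vec /sigma_tree; cbv beta zeta.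
under eq_bigr do rewrite -natr_sum.
rewrite -natr_sum qsh_count_words ?size_rforests_gt0 ?size_lforests_gt0 //.
by rewrite count_map count_filter; congr (_%:R)%R; apply: eq_count => w; rewrite /= andbC.
Qed.

Unset Implicit Arguments.
Theorem mainTheorem9 (K : fieldType) (t s : tree) :
  wf t -> wf s -> t != Leaf -> s != Leaf ->
  let k := size (rforests t) in
  [/\ vec K (prec t s) = qsh_sum K t s (fun i => i == 0),
      vec K (dot t s) = qsh_sum K t s (fun i => (i == 0) || (i == k))
    & vec K (succ t s) = qsh_sum K t s (fun i => i == k)].
Proof.
move=> wft wfs t_nL s_nL k.
have k_neq0 : (k == 0) = false by rewrite eqn0Ngt size_rforests_gt0.
have [-> -> ->] := products_words wft wfs t_nL s_nL.
rewrite !qsh_sum_words //= ?eqxx ?(eq_sym 0 k) ?k_neq0 //;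
  by move=> i /negbTE i_n0 /negbTE i_nk; rewrite ?i_n0 ?i_nk.
Qed.
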